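(* Let $(A,+,\circ)$ be a skew brace and let $t(x_1,\dots,x_n)$ be a term in the language $\{+,-,*,\bar{\ },0\}$ such that no occurrence of the variable $x_1$ lies inside a subterm whose outermost operation is $*$. Then there exists $k\in\mathbb{Z}$ such that $t(x_1+z,x_2,\dots,x_n)=t(x_1,x_2,\dots,x_n)+kz$ for every $z\in\zeta(A)$ and all $x_1,\dots,x_n\in A$.
   Context: A skew brace is a triple $(A,+,\circ)$ where $(A,+)$ and $(A,\circ)$ are groups (not necessarily abelian; $+$ is written additively) such that $x\circ(y+z)=(x\circ y)-x+(x\circ z)$ for all $x,y,z\in A$; the common neutral element is $0$, $-x$ is the $+$-inverse and $\bar x$ the $\circ$-inverse. Let $\lambda_x(y)=-x+(x\circ y)$ and $x*y=-x+(x\circ y)-y$; $[x,y]_+=x+y-x-y$. Terms are built from variables and the constant $0$ using binary $+$, binary $*$, unary $-$ and unary $\bar{\ }$ (note $x\circ y=x+(x*y)+y$, so this language is equivalent to $\{+,-,\circ,\bar{\ },0\}$). The center is $\zeta(A)=\{x\in A: x*y=y*x=[x,y]_+=0\ \forall y\in A\}=\{x\in A: x+y=y+x=x\circ y=y\circ x\ \forall y\in A\}$. For $k\in\mathbb{Z}$, $kz$ denotes the $k$-th multiple of $z$ in $(A,+)$. *)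

From Stdlib Require Import ZArith PeanoNat.

Record skew_brace := SkewBrace {
  carrier :> Type;
  sb_add : carrier -> carrier -> carrier;
  sb_opp : carrier -> carrier;
  sb_zero : carrier;
  sb_circ : carrier -> carrier -> carrier;
  sb_inv : carrier -> carrier;
  sb_addA : forall x y z, sb_add x (sb_add y z) = sb_add (sb_add x y) z;
  sb_add0l : forall x, sb_add sb_zero x = x;
  sb_add0r : forall x, sb_add x sb_zero = x;
  sb_addNl : forall x, sb_add (sb_opp x) x = sb_zero;
  sb_addNr : forall x, sb_add x (sb_opp x) = sb_zero;
  sb_circA : forall x y z, sb_circ x (sb_circ y z) = sb_circ (sb_circ x y) z;
  sb_circ0l : forall x, sb_circ sb_zero x = x;
  sb_circ0r : forall x, sb_circ x sb_zero = x;
  sb_circVl : forall x, sb_circ (sb_inv x) x = sb_zero;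
  sb_circVr : forall x, sb_circ x (sb_inv x) = sb_zero;
  sb_brace : forall x y z,
      sb_circ x (sb_add y z) = sb_add (sb_add (sb_circ x y) (sb_opp x)) (sb_circ x z)
}.

Section Ops.
Variable A : skew_brace.

Definition sb_star (x y : A) : A :=
  sb_add A (sb_add A (sb_opp A x) (sb_circ A x y)) (sb_opp A y).

Definition sb_comm (x y : A) : A :=
  sb_add A (sb_add A (sb_add A x y) (sb_opp A x)) (sb_opp A y).

Definition in_center (x : A) : Prop :=
  forall y : A, sb_star x y = sb_zero A /\ sb_star y x = sb_zero A
                /\ sb_comm x y = sb_zero A.

Definition sb_natmul (n : nat) (z : A) : A :=
  Nat.iter n (fun y => sb_add A z y) (sb_zero A).

Definition sb_zmul (k : Z) (z : A) : A :=
  match k with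
  | Z0 => sb_zero A
  | Zpos p => sb_natmul (Pos.to_nat p) z
  | Zneg p => sb_opp A (sb_natmul (Pos.to_nat p) z)
  end.
End Ops.

(* Terms in the language {+, -, *, bar, 0}; variables are indexed by nat,
   variable 0 playing the role of x_1. *)
Inductive term : Type :=
  | TVar : nat -> term
  | TZero : term
  | TAdd : term -> term -> term
  | TStar : term -> term -> term
  | TOpp : term -> term
  | TBar : term -> term.

Fixpoint occurs (i : nat) (t : term) : bool :=
  match t with
  | TVar j => Nat.eqb i j
  | TZero => false
  | TAdd a b | TStar a b => occurs i a || occurs i b
  | TOpp a | TBar a => occurs i a
  end.

Fixpoint not_under_star (i : nat) (t : term) : bool :=
  match t with
  | TVar _ | TZero => true
  | TAdd a b => not_under_star i a && not_under_star i b
  | TStar a b => negb (occurs i a) && negb (occurs i b)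
  | TOpp a | TBar a => not_under_star i a
  end.

Fixpoint eval (A : skew_brace) (env : nat -> A) (t : term) : A :=
  match t with
  | TVar j => env j
  | TZero => sb_zero A
  | TAdd a b => sb_add A (eval A env a) (eval A env b)
  | TStar a b => sb_star A (eval A env a) (eval A env b)
  | TOpp a => sb_opp A (eval A env a)
  | TBar a => sb_inv A (eval A env a)
  end.

Definition upd {A : Type} (env : nat -> A) (i : nat) (v : A) : nat -> A :=
  fun j => if Nat.eqb j i then v else env j.

From Stdlib Require Import ZArith Lia.

(* Call w "central" when x o w = x + w, w o x = w + x and
   w + x = x + w for all x; every element of the center zeta(A) is central,
   and central elements are closed under 0, + and -, hence every multiple
   k z of a central z is central.  For central w the three operations that
   may sit above x_1 in t only shift by a central element:
     (a + w) + (b + w') = (a + b) + (w + w'),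
     -(a + w) = -a + (-w),     bar(a + w) = bar a + (-w),
   while a subterm e1 * e2 not containing x_1 does not change at all.
   By induction on t (with k z + j z = (k + j) z and -(k z) = (-k) z) the
   shift caused by x_1 |-> x_1 + z is a fixed multiple k z, which is the
   theorem. *)

Section SkewBraceShift.
Variable A : skew_brace.
Local Infix "⊕" := (sb_add A) (at level 50, left associativity).
Local Infix "⊙" := (sb_circ A) (at level 40, left associativity).
Local Notation "⊖ x" := (sb_opp A x) (at level 35, right associativity).
Local Notation "'O'" := (sb_zero A).
Local Notation inv := (sb_inv A).

Lemma addNK a b : ⊖a ⊕ (a ⊕ b) = b.
Proof. rewrite sb_addA, sb_addNl, sb_add0l; reflexivity. Qed.

Lemma addKN a b : a ⊕ (⊖a ⊕ b) = b.
Proof. rewrite sb_addA, sb_addNr, sb_add0l; reflexivity. Qed.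

Lemma addrK a b : b ⊕ a ⊕ ⊖a = b.
Proof. rewrite <- sb_addA, sb_addNr, sb_add0r; reflexivity. Qed.

Lemma addrNK a b : b ⊕ ⊖a ⊕ a = b.
Proof. rewrite <- sb_addA, sb_addNl, sb_add0r; reflexivity. Qed.

Lemma opp_unique a b : a ⊕ b = O -> b = ⊖a.
Proof. intro H. rewrite <- (addNK a b), H, sb_add0r. reflexivity. Qed.

Lemma subr0_eq a b : a ⊕ ⊖b = O -> a = b.
Proof. intro H. rewrite <- (addrNK b a), H, sb_add0l. reflexivity. Qed.

Lemma oppK a : ⊖⊖a = a.
Proof. symmetry. apply opp_unique, sb_addNl. Qed.

Lemma oppD a b : ⊖(a ⊕ b) = ⊖b ⊕ ⊖a.
Proof.
  symmetry. apply opp_unique.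
  rewrite <- sb_addA, (sb_addA A b), sb_addNr, sb_add0l, sb_addNr. reflexivity.
Qed.

Lemma inv_unique x y : x ⊙ y = O -> inv x = y.
Proof.
  intro H. rewrite <- (sb_circ0r A (inv x)), <- H, sb_circA, sb_circVl, sb_circ0l.
  reflexivity.
Qed.

Lemma invM a b : inv (a ⊙ b) = inv b ⊙ inv a.
Proof.
  apply inv_unique.
  rewrite <- sb_circA, (sb_circA A b), sb_circVr, sb_circ0l, sb_circVr. reflexivity.
Qed.

Record central (w : A) : Prop := {
  central_circr : forall x, x ⊙ w = x ⊕ w;
  central_circl : forall x, w ⊙ x = w ⊕ x;
  central_addC  : forall x, w ⊕ x = x ⊕ w
}.
Arguments central_circr {w}.
Arguments central_circl {w}.
Arguments central_addC {w}.

Lemma center_central z : in_center A z -> central z.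
Proof.
  intro H. split; intro x; destruct (H x) as [Hzx [Hxz Hcomm]];
    unfold sb_star, sb_comm in *.
  - apply subr0_eq in Hxz. rewrite <- (addKN x (x ⊙ z)), Hxz. reflexivity.
  - apply subr0_eq in Hzx. rewrite <- (addKN z (z ⊙ x)), Hzx. reflexivity.
  - apply subr0_eq in Hcomm. rewrite <- Hcomm at 2. rewrite addrNK. reflexivity.
Qed.

Lemma central0 : central O.
Proof.
  split; intro x; rewrite ?sb_circ0r, ?sb_circ0l, ?sb_add0l, ?sb_add0r; reflexivity.
Qed.

(* Closure under +; the left product uses the brace identity. *)
Lemma centralD u v : central u -> central v -> central (u ⊕ v).
Proof.
  intros Hu Hv. split; intro x.
  - rewrite sb_brace, (central_circr Hu), (central_circr Hv).
    rewrite <- (sb_addA A (x ⊕ u)), addNK, sb_addA. reflexivity.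
  - rewrite <- (central_circr Hv u) at 1.
    rewrite <- sb_circA, (central_circl Hv), (central_circl Hu). apply sb_addA.
  - rewrite <- sb_addA, (central_addC Hv), sb_addA, (central_addC Hu).
    symmetry. apply sb_addA.
Qed.

(* Closure under -; since u o (-u) = u - u = 0, the o-inverse of u is -u. *)
Lemma centralN u : central u -> central (⊖u).
Proof.
  intro Hu.
  assert (addC : forall x, ⊖u ⊕ x = x ⊕ ⊖u).
  { intro x. rewrite <- (addNK u (x ⊕ ⊖u)). f_equal.
    rewrite sb_addA, (central_addC Hu), addrK. reflexivity. }
  assert (circr : forall x, x ⊙ ⊖u = x ⊕ ⊖u).
  { intro x. pose proof (sb_brace A x u (⊖u)) as E.
    rewrite sb_addNr, sb_circ0r, (central_circr Hu), <- (central_addC Hu x), addrK in E.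
    rewrite <- addC. rewrite E at 2. rewrite addNK. reflexivity. }
  assert (inv_u : inv u = ⊖u).
  { apply inv_unique. rewrite circr. apply sb_addNr. }
  split; [exact circr | | exact addC].
  intro x. rewrite <- inv_u. rewrite <- (addKN u x) at 1.
  rewrite <- (central_circl Hu), sb_circA, sb_circVl, sb_circ0l, inv_u. reflexivity.
Qed.

Lemma central_inv w : central w -> inv w = ⊖w.
Proof.
  intro Hw. apply inv_unique. rewrite (central_circr (centralN _ Hw)). apply sb_addNr.
Qed.

Lemma natmulD a b z : sb_natmul A (a + b) z = sb_natmul A a z ⊕ sb_natmul A b z.
Proof.
  induction a as [|a IH]; simpl.
  - rewrite sb_add0l. reflexivity.
  - rewrite IH. apply sb_addA.
Qed.

Lemma central_natmul n z : central z -> central (sb_natmul A n z).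
Proof.
  intro Hz. induction n as [|n IH]; simpl; [apply central0 | apply centralD; assumption].
Qed.

Lemma zmul_sub_nat (a b : nat) z :
  sb_zmul A (Z.of_nat a - Z.of_nat b) z = sb_natmul A a z ⊕ ⊖sb_natmul A b z.
Proof.
  destruct (Nat.le_gt_cases b a) as [Hba | Hab].
  - replace a with ((a - b) + b)%nat at 2 by lia.
    rewrite natmulD, addrK.
    replace (Z.of_nat a - Z.of_nat b)%Z with (Z.of_nat (a - b)) by lia.
    destruct (a - b)%nat; simpl; [reflexivity|].
    rewrite SuccNat2Pos.id_succ. reflexivity.
  - replace b with ((b - a) + a)%nat at 2 by lia.
    rewrite natmulD, oppD, addKN.
    replace (Z.of_nat a - Z.of_nat b)%Z with (- Z.of_nat (b - a))%Z by lia.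
    destruct (b - a)%nat eqn:Hd; [lia|]. simpl.
    rewrite SuccNat2Pos.id_succ. reflexivity.
Qed.

Lemma Z_nat_diff (k : Z) : exists a b : nat, k = (Z.of_nat a - Z.of_nat b)%Z.
Proof. exists (Z.to_nat k), (Z.to_nat (- k)). lia. Qed.

Lemma central_zmul k z : central z -> central (sb_zmul A k z).
Proof.
  intro Hz. destruct (Z_nat_diff k) as [a [b ->]]. rewrite zmul_sub_nat.
  apply centralD; [| apply centralN]; apply central_natmul; assumption.
Qed.

Lemma zmulD j k z : central z ->
  sb_zmul A (j + k) z = sb_zmul A j z ⊕ sb_zmul A k z.
Proof.
  intro Hz. destruct (Z_nat_diff j) as [a [b ->]]. destruct (Z_nat_diff k) as [c [d ->]].
  replace (Z.of_nat a - Z.of_nat b + (Z.of_nat c - Z.of_nat d))%Z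
    with (Z.of_nat (a + c) - Z.of_nat (d + b))%Z by lia.
  rewrite !zmul_sub_nat, !natmulD, oppD.
  rewrite <- !sb_addA. f_equal. rewrite !sb_addA. f_equal.
  symmetry. apply (central_addC (centralN _ (central_natmul b z Hz))).
Qed.

Lemma zmulN k z : sb_zmul A (- k) z = ⊖sb_zmul A k z.
Proof.
  destruct (Z_nat_diff k) as [a [b ->]].
  replace (- (Z.of_nat a - Z.of_nat b))%Z with (Z.of_nat b - Z.of_nat a)%Z by lia.
  rewrite !zmul_sub_nat, oppD, oppK. reflexivity.
Qed.

Lemma shift_add a b w w' : central w -> (a ⊕ w) ⊕ (b ⊕ w') = (a ⊕ b) ⊕ (w ⊕ w').
Proof.
  intro Hw. rewrite <- !sb_addA. f_equal. rewrite !sb_addA, (central_addC Hw). reflexivity.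
Qed.

Lemma shift_opp a w : central w -> ⊖(a ⊕ w) = ⊖a ⊕ ⊖w.
Proof. intro Hw. rewrite oppD. apply (central_addC (centralN _ Hw)). Qed.

Lemma shift_inv a w : central w -> inv (a ⊕ w) = inv a ⊕ ⊖w.
Proof.
  intro Hw. pose proof (centralN _ Hw) as HNw.
  rewrite <- (central_circr Hw), invM, (central_inv _ Hw), (central_circl HNw).
  apply (central_addC HNw).
Qed.

Lemma eval_upd_notin t env v :
  occurs 0 t = false -> eval A (upd env 0 v) t = eval A env t.
Proof.
  induction t as [n | | t1 IH1 t2 IH2 | t1 IH1 t2 IH2 | t1 IH | t1 IH]; simpl;
    intro H; try (apply Bool.orb_false_iff in H as [H1 H2]);
    try (f_equal; auto).
  unfold upd. destruct n; simpl in *; [discriminate | reflexivity].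
Qed.

Lemma eval_shift_central t : not_under_star 0 t = true ->
  exists k : Z, forall z, central z -> forall env,
    eval A (upd env 0 (env 0 ⊕ z)) t = eval A env t ⊕ sb_zmul A k z.
Proof.
  induction t as [n | | t1 IH1 t2 IH2 | t1 _ t2 _ | t1 IH | t1 IH]; simpl; intro H.
  - exists (if Nat.eqb n 0 then 1%Z else 0%Z). intros z _ env.
    unfold upd. destruct n; simpl; rewrite sb_add0r; reflexivity.
  - exists 0%Z. intros. simpl. rewrite sb_add0r. reflexivity.
  - apply andb_prop in H as [H1 H2].
    destruct (IH1 H1) as [j E1], (IH2 H2) as [k E2].
    exists (j + k)%Z. intros z Hz env.
    rewrite E1, E2, zmulD by assumption.
    apply shift_add, central_zmul, Hz.
  - apply andb_prop in H as [H1 H2].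
    apply Bool.negb_true_iff in H1, H2.
    exists 0%Z. intros. simpl. rewrite !eval_upd_notin, sb_add0r by assumption.
    reflexivity.
  - destruct (IH H) as [k E]. exists (- k)%Z. intros z Hz env.
    rewrite E, zmulN by assumption. apply shift_opp, central_zmul, Hz.
  - destruct (IH H) as [k E]. exists (- k)%Z. intros z Hz env.
    rewrite E, zmulN by assumption. apply shift_inv, central_zmul, Hz.
Qed.

End SkewBraceShift.

Theorem mainTheorem15 (A : skew_brace) (t : term) :
  not_under_star 0 t = true ->
  exists k : Z, forall (z : A), in_center A z ->
    forall env : nat -> A,
      eval A (upd env 0 (sb_add A (env 0) z)) t
      = sb_add A (eval A env t) (sb_zmul A k z).
Proof.
  intro H. destruct (eval_shift_central A t H) as [k E].
  exists k. intros z Hz env. apply E, center_central, Hz.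
Qed.
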